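(* Let $\varphi:\mathbb B\to\mathbb B$ be a slice regular function with $\varphi(0)=0$. Then the operators $C_\varphi f=f^{\odot}\varphi$ and $D_\varphi f=f_{\odot}\varphi$ are bounded on $H^2(\mathbb B)$ and $\|C_\varphi\|=\|D_\varphi\|=1$.
   Context: $\mathbb H$ quaternions, $\mathbb S=\{q:q^2=-1\}$, $\mathbb C_I=\mathbb R+I\mathbb R$, $\mathbb B$ the open unit ball of $\mathbb H$. A function on a domain $\Omega$ is slice regular if on each $\Omega\cap\mathbb C_I$ it is $C^1$ and annihilated by $\frac12(\partial_x+I\partial_y)$; regular functions on $\mathbb B$ are exactly convergent power series $\sum_n q^na_n$. The $\ast$-product of power series is $\big(\sum q^na_n\big)\ast\big(\sum q^nb_n\big)=\sum_n q^n\sum_{k=0}^na_kb_{n-k}$, $\varphi^{\ast0}=1$, $\varphi^{\ast n}=\varphi\ast\varphi^{\ast(n-1)}$. For $f(q)=\sum q^na_n$ regular on $\mathbb B$ and $\varphi:\mathbb B\to\mathbb B$ regular: $f^{\odot}\varphi=\sum_n\varphi^{\ast n}a_n$, $f_{\odot}\varphi=\sum_n a_n\ast\varphi^{\ast n}$. $H^2(\mathbb B)$ is the space of regular $f=\sum q^na_n$ on $\mathbb B$ with $\|f\|_2^2=\sum|a_n|^2<\infty$ (equivalently $\|f\|_2=\sup_{I\in\mathbb S}\lim_{r\to1^-}(\frac1{2\pi}\int_{-\pi}^\pi|f(re^{I\theta})|^2d\theta)^{1/2}$). Operator norm: $\|T\|=\sup\{\|Tf\|_2:\|f\|_2\le1\}$.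 *)

From Stdlib Require Import Reals.
Open Scope R_scope.

Record H := mkH { q0 : R; q1 : R; q2 : R; q3 : R }.

Definition qzero : H := mkH 0 0 0 0.
Definition qone  : H := mkH 1 0 0 0.
Definition qadd (x y : H) : H :=
  mkH (q0 x + q0 y) (q1 x + q1 y) (q2 x + q2 y) (q3 x + q3 y).
Definition qsub (x y : H) : H :=
  mkH (q0 x - q0 y) (q1 x - q1 y) (q2 x - q2 y) (q3 x - q3 y).
(* Hamilton product, i^2 = j^2 = k^2 = ijk = -1 *)
Definition qmul (x y : H) : H :=
  mkH (q0 x * q0 y - q1 x * q1 y - q2 x * q2 y - q3 x * q3 y)
      (q0 x * q1 y + q1 x * q0 y + q2 x * q3 y - q3 x * q2 y)
      (q0 x * q2 y - q1 x * q3 y + q2 x * q0 y + q3 x * q1 y)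
      (q0 x * q3 y + q1 x * q2 y - q2 x * q1 y + q3 x * q0 y).
Definition qnorm (x : H) : R :=
  sqrt (q0 x ^ 2 + q1 x ^ 2 + q2 x ^ 2 + q3 x ^ 2).

Fixpoint qpow (x : H) (n : nat) : H :=
  match n with O => qone | S m => qmul x (qpow x m) end.

Fixpoint qsum (f : nat -> H) (n : nat) : H :=
  match n with O => f O | S m => qadd (qsum f m) (f (S m)) end.

Definition qcv (u : nat -> H) (l : H) : Prop :=
  forall eps, eps > 0 -> exists N, forall n, (n >= N)%nat -> qnorm (qsub (u n) l) < eps.

(* A (formal) power series sum_n q^n a_n is given by its coefficients a : nat -> H. *)
Definition psum (a : nat -> H) (q : H) (N : nat) : H :=
  qsum (fun n => qmul (qpow q n) (a n)) N.

Definition ps_value (a : nat -> H) (q : H) (l : H) : Prop := qcv (psum a q) l.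

(* regular on the open unit ball B = convergent power series on B *)
Definition regular_on_B (a : nat -> H) : Prop :=
  forall q, qnorm q < 1 -> exists l, ps_value a q l.

Definition regular_B_to_B (a : nat -> H) : Prop :=
  forall q, qnorm q < 1 -> exists l, ps_value a q l /\ qnorm l < 1.

Definition star (a b : nat -> H) : nat -> H :=
  fun n => qsum (fun k => qmul (a k) (b (n - k)%nat)) n.

Fixpoint starpow (b : nat -> H) (n : nat) : nat -> H :=
  match n with
  | O => fun m => match m with O => qone | S _ => qzero end
  | S k => star b (starpow b k)
  end.

(* f^{odot} phi = sum_n phi^{*n} a_n, coefficientwise.  Since phi(0)=0, the
   series phi^{*n} has no terms of degree < n, so the coefficient of q^m only
   receives contributions from n <= m. *)
Definition Cop (b a : nat -> H) : nat -> H :=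
  fun m => qsum (fun n => qmul (starpow b n m) (a n)) m.

Definition Dop (b a : nat -> H) : nat -> H :=
  fun m => qsum (fun n => qmul (a n) (starpow b n m)) m.

Definition H2norm_is (a : nat -> H) (r : R) : Prop :=
  0 <= r /\ Un_cv (sum_f_R0 (fun n => qnorm (a n) ^ 2)) (r ^ 2).

Definition in_H2 (a : nat -> H) : Prop :=
  regular_on_B a /\ exists r, H2norm_is a r.

Definition opnorm_set (T : (nat -> H) -> (nat -> H)) (r : R) : Prop :=
  exists a ra, in_H2 a /\ H2norm_is a ra /\ ra <= 1 /\ H2norm_is (T a) r.

(* Both operators satisfy a recursion in which the tail of [f] is multiplied by [phi]:
   [C_phi f = f(0) + phi * C_phi (shift f)] and [D_phi f = f(0) + D_phi (shift f) * phi].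
   It therefore suffices that left and right *-multiplication by [phi] do not increase the
   truncated norms [sum_(n <= m) |a_n|^2]; as [C_phi 1 = D_phi 1 = 1], both norms are then 1.

   For right multiplication by a [psi] with [|psi| <= 1], evaluate truncations at the [N]-th
   roots of unity on the circle of radius [r] in [C_i]: the product formula
   [(g * psi)(z) = g(z) psi(g(z)^-1 z g(z))] bounds [|(g * psi)(z)|] by [|g(z)|] up to a small
   error, the discrete Parseval identity turns this into a bound on the [r]-weighted norms, and
   [r -> 1] concludes.  Left multiplication reduces to it by conjugating all coefficients,
   [(phi * h)^c = h^c * phi^c]; the point is that [phi^c] is still bounded by 1.  By the
   representation formula, on each sphere [x + S y] the function [phi] acts through a 2x2
   complex matrix built from [phi(x + i y)] and [phi(x - i y)], and [phi^c] through its
   transpose, which has the same operator norm. *)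

From Stdlib Require Import Reals Lra Lia Psatz.
Open Scope R_scope.

(** * Quaternions *)

Lemma H_ext (x y : H) :
  q0 x = q0 y -> q1 x = q1 y -> q2 x = q2 y -> q3 x = q3 y -> x = y.
Proof. destruct x, y; simpl; intros; subst; reflexivity. Qed.

Definition qconj (x : H) : H := mkH (q0 x) (- q1 x) (- q2 x) (- q3 x).
Definition qopp (x : H) : H := mkH (- q0 x) (- q1 x) (- q2 x) (- q3 x).
Definition qreal (r : R) : H := mkH r 0 0 0.
Definition qi : H := mkH 0 1 0 0.
Definition qj : H := mkH 0 0 1 0.
Definition qnorm2 (x : H) : R := q0 x * q0 x + q1 x * q1 x + q2 x * q2 x + q3 x * q3 x.
Definition qdot (x y : H) : R := q0 x * q0 y + q1 x * q1 y + q2 x * q2 y + q3 x * q3 y.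
Definition qinv (x : H) : H :=
  mkH (q0 x / qnorm2 x) (- q1 x / qnorm2 x) (- q2 x / qnorm2 x) (- q3 x / qnorm2 x).

Ltac qring := repeat match goal with x : H |- _ => destruct x end;
  apply H_ext; unfold qadd, qsub, qmul, qzero, qone, qconj, qopp, qreal, qi, qj in *;
  simpl; ring.

Lemma qadd_comm x y : qadd x y = qadd y x. Proof. qring. Qed.
Lemma qadd_assoc x y z : qadd x (qadd y z) = qadd (qadd x y) z. Proof. qring. Qed.
Lemma qadd_0_l x : qadd qzero x = x. Proof. qring. Qed.
Lemma qadd_0_r x : qadd x qzero = x. Proof. qring. Qed.
Lemma qmul_assoc x y z : qmul x (qmul y z) = qmul (qmul x y) z. Proof. qring. Qed.
Lemma qmul_addl x y z : qmul (qadd x y) z = qadd (qmul x z) (qmul y z). Proof. qring. Qed.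
Lemma qmul_addr x y z : qmul x (qadd y z) = qadd (qmul x y) (qmul x z). Proof. qring. Qed.
Lemma qmul_0_l x : qmul qzero x = qzero. Proof. qring. Qed.
Lemma qmul_0_r x : qmul x qzero = qzero. Proof. qring. Qed.
Lemma qmul_1_l x : qmul qone x = x. Proof. qring. Qed.
Lemma qmul_1_r x : qmul x qone = x. Proof. qring. Qed.
Lemma qsub_diag x : qsub x x = qzero. Proof. qring. Qed.
Lemma qconj_mul x y : qconj (qmul x y) = qmul (qconj y) (qconj x). Proof. qring. Qed.
Lemma qconj_add x y : qconj (qadd x y) = qadd (qconj x) (qconj y). Proof. qring. Qed.

Lemma qmul_qinv_l x : qnorm2 x <> 0 -> qmul (qinv x) x = qone.
Proof. intros h; destruct x; unfold qinv, qnorm2 in *; apply H_ext; simpl in *; field; auto. Qed.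
Lemma qmul_qinv_r x : qnorm2 x <> 0 -> qmul x (qinv x) = qone.
Proof. intros h; destruct x; unfold qinv, qnorm2 in *; apply H_ext; simpl in *; field; auto. Qed.

Lemma qnorm2_mul x y : qnorm2 (qmul x y) = qnorm2 x * qnorm2 y.
Proof. destruct x, y; unfold qnorm2, qmul; simpl; ring. Qed.
Lemma qnorm2_conj x : qnorm2 (qconj x) = qnorm2 x.
Proof. destruct x; unfold qnorm2, qconj; simpl; ring. Qed.
Lemma qnorm2_qinv x : qnorm2 x <> 0 -> qnorm2 (qinv x) = / qnorm2 x.
Proof. intros h; destruct x; unfold qinv, qnorm2 in *; simpl in *; field; auto. Qed.
Lemma qnorm2_ge0 x : 0 <= qnorm2 x.
Proof. unfold qnorm2; nra. Qed.
Lemma qnorm2_zero : qnorm2 qzero = 0.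
Proof. unfold qnorm2; simpl; ring. Qed.
Lemma qnorm2_eq0 x : qnorm2 x = 0 -> x = qzero.
Proof. destruct x; unfold qnorm2; simpl; intro E. apply H_ext; simpl; nra. Qed.
Lemma qnorm2_add x y : qnorm2 (qadd x y) = qnorm2 x + 2 * qdot x y + qnorm2 y.
Proof. destruct x, y; unfold qnorm2, qdot, qadd; simpl; ring. Qed.

Lemma qnorm_sqrt x : qnorm x = sqrt (qnorm2 x).
Proof. unfold qnorm, qnorm2; f_equal; ring. Qed.
Lemma qnorm_ge0 x : 0 <= qnorm x.
Proof. apply sqrt_pos. Qed.
Lemma qnorm_pow2 x : qnorm x ^ 2 = qnorm2 x.
Proof. rewrite qnorm_sqrt, <- Rsqr_pow2. apply Rsqr_sqrt, qnorm2_ge0. Qed.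
Lemma qnorm_mul x y : qnorm (qmul x y) = qnorm x * qnorm y.
Proof. rewrite !qnorm_sqrt, qnorm2_mul. apply sqrt_mult; apply qnorm2_ge0. Qed.
Lemma qnorm_zero : qnorm qzero = 0.
Proof. rewrite qnorm_sqrt, qnorm2_zero; apply sqrt_0. Qed.
Lemma qnorm_eq0 x : qnorm x = 0 -> x = qzero.
Proof. intro h. apply qnorm2_eq0. rewrite <- qnorm_pow2, h. ring. Qed.
Lemma qnorm_opp x : qnorm (qopp x) = qnorm x.
Proof. rewrite !qnorm_sqrt; f_equal; destruct x; unfold qnorm2, qopp; simpl; ring. Qed.
Lemma qnorm_sub_comm x y : qnorm (qsub x y) = qnorm (qsub y x).
Proof. rewrite !qnorm_sqrt; f_equal; destruct x, y; unfold qnorm2, qsub; simpl; ring. Qed.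
Lemma qnorm_qreal r : 0 <= r -> qnorm (qreal r) = r.
Proof.
  intros h. rewrite qnorm_sqrt. unfold qnorm2, qreal; simpl.
  replace (r * r + 0 * 0 + 0 * 0 + 0 * 0) with (r * r) by ring. apply sqrt_square; auto.
Qed.

Lemma qnorm_le_of_qnorm2 x c : 0 <= c -> qnorm2 x <= c * c -> qnorm x <= c.
Proof. intros h1 h2. rewrite qnorm_sqrt, <- (sqrt_square c) by lra. apply sqrt_le_1_alt; lra. Qed.
Lemma qnorm2_le_of_qnorm x c : qnorm x <= c -> qnorm2 x <= c * c.
Proof. intro h. rewrite <- qnorm_pow2. pose proof (qnorm_ge0 x). nra. Qed.

Lemma qdot_le_qnorm x y : qdot x y <= qnorm x * qnorm y.
Proof.
  rewrite !qnorm_sqrt, <- sqrt_mult by apply qnorm2_ge0.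
  destruct (Rle_or_lt (qdot x y) 0) as [h|h].
  - pose proof (sqrt_pos (qnorm2 x * qnorm2 y)); lra.
  - rewrite <- (sqrt_pow2 (qdot x y)) by lra. apply sqrt_le_1_alt.
    destruct x as [a0 a1 a2 a3], y as [b0 b1 b2 b3]; unfold qdot, qnorm2; simpl.
    (* Lagrange's identity *)
    assert (E : (a0*a0+a1*a1+a2*a2+a3*a3)*(b0*b0+b1*b1+b2*b2+b3*b3) - (a0*b0+a1*b1+a2*b2+a3*b3)^2
      = (a0*b1-a1*b0)^2+(a0*b2-a2*b0)^2+(a0*b3-a3*b0)^2
        +(a1*b2-a2*b1)^2+(a1*b3-a3*b1)^2+(a2*b3-a3*b2)^2) by ring.
    pose proof (pow2_ge_0 (a0*b1-a1*b0)); pose proof (pow2_ge_0 (a0*b2-a2*b0));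
    pose proof (pow2_ge_0 (a0*b3-a3*b0)); pose proof (pow2_ge_0 (a1*b2-a2*b1));
    pose proof (pow2_ge_0 (a1*b3-a3*b1)); pose proof (pow2_ge_0 (a2*b3-a3*b2)). lra.
Qed.

Lemma qnorm_triangle x y : qnorm (qadd x y) <= qnorm x + qnorm y.
Proof.
  pose proof (qnorm_ge0 x). pose proof (qnorm_ge0 y).
  apply qnorm_le_of_qnorm2; [lra|].
  rewrite qnorm2_add, <- (qnorm_pow2 x), <- (qnorm_pow2 y). pose proof (qdot_le_qnorm x y). nra.
Qed.
Lemma qnorm_sub_triangle x y z : qnorm (qsub x z) <= qnorm (qsub x y) + qnorm (qsub y z).
Proof. replace (qsub x z) with (qadd (qsub x y) (qsub y z)) by qring. apply qnorm_triangle. Qed.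
Lemma qnorm_sub_le x y : qnorm (qsub x y) <= qnorm x + qnorm y.
Proof. rewrite <- (qnorm_opp y). replace (qsub x y) with (qadd x (qopp y)) by qring. apply qnorm_triangle. Qed.
Lemma qnorm_le_sub x y : qnorm x <= qnorm y + qnorm (qsub x y).
Proof. replace x with (qadd y (qsub x y)) at 1 by qring. apply qnorm_triangle. Qed.

Lemma Rabs_comp_le_qnorm x :
  Rabs (q0 x) <= qnorm x /\ Rabs (q1 x) <= qnorm x /\
  Rabs (q2 x) <= qnorm x /\ Rabs (q3 x) <= qnorm x.
Proof.
  rewrite qnorm_sqrt, <- !sqrt_Rsqr_abs; unfold Rsqr, qnorm2.
  repeat split; apply sqrt_le_1_alt; nra.
Qed.

Lemma qnorm_le_sum_Rabs x : qnorm x <= Rabs (q0 x) + Rabs (q1 x) + Rabs (q2 x) + Rabs (q3 x).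
Proof.
  pose proof (Rabs_pos (q0 x)); pose proof (Rabs_pos (q1 x));
  pose proof (Rabs_pos (q2 x)); pose proof (Rabs_pos (q3 x)).
  apply qnorm_le_of_qnorm2; [lra|]. unfold qnorm2.
  pose proof (Rsqr_abs (q0 x)); pose proof (Rsqr_abs (q1 x));
  pose proof (Rsqr_abs (q2 x)); pose proof (Rsqr_abs (q3 x)). unfold Rsqr in *. nra.
Qed.

Lemma qpow_add z k l : qpow z (k + l) = qmul (qpow z k) (qpow z l).
Proof. induction k; simpl. rewrite qmul_1_l; auto. rewrite IHk. apply qmul_assoc. Qed.
Lemma qnorm_qpow q n : qnorm (qpow q n) = qnorm q ^ n.
Proof.
  induction n; simpl; [|rewrite qnorm_mul, IHn; auto].
  rewrite <- (qnorm_qreal 1) by lra. reflexivity.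
Qed.

(** * Finite sums *)

Lemma qsum_ext f g n : (forall i, (i <= n)%nat -> f i = g i) -> qsum f n = qsum g n.
Proof. induction n; simpl; intros h. - apply h; lia. - rewrite IHn, h; auto. Qed.
Lemma qsum_add f g n : qsum (fun i => qadd (f i) (g i)) n = qadd (qsum f n) (qsum g n).
Proof. induction n; simpl; auto. rewrite IHn. qring. Qed.
Lemma qsum_mul_l c f n : qmul c (qsum f n) = qsum (fun i => qmul c (f i)) n.
Proof. induction n; simpl; auto. rewrite qmul_addr, IHn; auto. Qed.
Lemma qsum_mul_r c f n : qmul (qsum f n) c = qsum (fun i => qmul (f i) c) n.
Proof. induction n; simpl; auto. rewrite qmul_addl, IHn; auto. Qed.
Lemma qsum_conj f n : qconj (qsum f n) = qsum (fun i => qconj (f i)) n.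
Proof. induction n; simpl; auto. rewrite qconj_add, IHn; auto. Qed.
Lemma qsum_eq_zero f n : (forall i, (i <= n)%nat -> f i = qzero) -> qsum f n = qzero.
Proof.
  induction n; simpl; intros h; [apply h; lia|].
  rewrite IHn by (intros; apply h; lia). rewrite h by lia. apply qadd_0_l.
Qed.
Lemma qsum_trim f n m : (n <= m)%nat -> (forall i, (n < i <= m)%nat -> f i = qzero) ->
  qsum f m = qsum f n.
Proof.
  intros hle; induction hle; intros h; auto.
  simpl. rewrite h, qadd_0_r by lia. apply IHhle. intros; apply h; lia.
Qed.
Lemma qsum_Sl f n : qsum f (S n) = qadd (f 0%nat) (qsum (fun i => f (S i)) n).
Proof.
  induction n; [reflexivity|].
  change (qsum f (S (S n))) with (qadd (qsum f (S n)) (f (S (S n)))).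
  rewrite IHn. simpl. apply eq_sym, qadd_assoc.
Qed.
Lemma qsum_exchange F n m :
  qsum (fun i => qsum (fun j => F i j) m) n = qsum (fun j => qsum (fun i => F i j) n) m.
Proof. induction n; simpl; auto. rewrite IHn, <- qsum_add. auto. Qed.
Lemma qsum_antidiagonal F N :
  qsum (fun n => qsum (fun k => F k (n - k)%nat) n) N
  = qsum (fun k => qsum (fun l => F k l) (N - k)) N.
Proof.
  induction N; [reflexivity|].
  cbn [qsum]. rewrite IHN, Nat.sub_diag. cbn [qsum].
  rewrite qadd_assoc. f_equal. rewrite <- qsum_add. apply qsum_ext; intros i hi.
  replace (S N - i)%nat with (S (N - i)) by lia. reflexivity.
Qed.
Lemma qsum_rev f n : qsum f n = qsum (fun k => f (n - k)%nat) n.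
Proof.
  induction n; [reflexivity|].
  rewrite (qsum_Sl (fun k => f (S n - k)%nat)). cbn [qsum].
  rewrite IHn, qadd_comm, Nat.sub_0_r. reflexivity.
Qed.

Lemma qsum_comp f n :
  q0 (qsum f n) = sum_f_R0 (fun i => q0 (f i)) n /\ q1 (qsum f n) = sum_f_R0 (fun i => q1 (f i)) n /\
  q2 (qsum f n) = sum_f_R0 (fun i => q2 (f i)) n /\ q3 (qsum f n) = sum_f_R0 (fun i => q3 (f i)) n.
Proof.
  induction n as [|n [E0 [E1 [E2 E3]]]]; simpl; auto.
  rewrite E0, E1, E2, E3; auto.
Qed.

Lemma qnorm2_qsum f n :
  qnorm2 (qsum f n) = sum_f_R0 (fun i => sum_f_R0 (fun k => qdot (f i) (f k)) n) n.
Proof.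
  assert (Hl : forall y m, qdot (qsum f m) y = sum_f_R0 (fun i => qdot (f i) y) m).
  { intros y m; induction m; simpl; auto. rewrite <- IHm.
    destruct (qsum f m), (f (S m)), y; unfold qdot, qadd; simpl; ring. }
  replace (qnorm2 (qsum f n)) with (qdot (qsum f n) (qsum f n)) by reflexivity.
  rewrite Hl. apply sum_eq; intros i _.
  replace (qdot (f i) (qsum f n)) with (qdot (qsum f n) (f i)) by (unfold qdot; ring).
  rewrite Hl. apply sum_eq; intros; unfold qdot; ring.
Qed.

Lemma sum_f_R0_mono (f : nat -> R) n m :
  (forall i, 0 <= f i) -> (n <= m)%nat -> sum_f_R0 f n <= sum_f_R0 f m.
Proof. intros h hle; induction hle; simpl; [lra|]. pose proof (h (S m)). lra. Qed.
Lemma sum_f_R0_single (f : nat -> R) n k : (k <= n)%nat ->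
  (forall i, (i <= n)%nat -> i <> k -> f i = 0) -> sum_f_R0 f n = f k.
Proof.
  induction n; simpl; intros hk h.
  - assert (k = 0%nat) by lia; subst; auto.
  - destruct (Nat.eq_dec k (S n)).
    + subst. rewrite sum_eq_R0; [lra|]. intros; apply h; lia.
    + rewrite IHn, (h (S n)); [lra | lia | lia | lia | intros; apply h; lia].
Qed.
Lemma sum_f_R0_Sl (f : nat -> R) m : sum_f_R0 f (S m) = f 0%nat + sum_f_R0 (fun i => f (S i)) m.
Proof. induction m; simpl in *; [ring|]. rewrite IHm. ring. Qed.

Lemma pow_le_pow_le1 r i m : 0 <= r <= 1 -> (i <= m)%nat -> r ^ m <= r ^ i.
Proof.
  intros hr h. replace m with (i + (m - i))%nat by lia. rewrite pow_add.
  pose proof (pow_le r i ltac:(lra)). pose proof (pow_incr r 1 (m - i) ltac:(lra)).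
  rewrite pow1 in *. nra.
Qed.

Lemma bernoulli_ineq t k : 0 <= t <= 1 -> 1 - INR k * t <= (1 - t) ^ k.
Proof.
  intros ht. induction k; [simpl; lra|].
  rewrite S_INR. simpl pow. pose proof (pow_le (1 - t) k ltac:(lra)). pose proof (pos_INR k).
  assert ((1 - t) * (1 - INR k * t) <= (1 - t) * (1 - t) ^ k) by (apply Rmult_le_compat_l; lra).
  nra.
Qed.

Lemma le_of_forall_pow_mul_le k X G : 0 <= X ->
  (forall r, 0 <= r < 1 -> r ^ k * X <= G) -> X <= G.
Proof.
  intros hX h. apply Rle_plus_epsilon. intros d hd.
  pose proof (pos_INR k).
  set (t := d / (INR k * X + 1 + d)).
  assert (ht : 0 < t < 1).
  { unfold t. split; [apply Rdiv_lt_0_compat; nra|].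
    apply Rmult_lt_reg_r with (INR k * X + 1 + d); [nra|].
    unfold Rdiv. rewrite Rmult_assoc, Rinv_l by nra. nra. }
  assert (ht2 : INR k * X * t <= d).
  { unfold t. apply Rle_trans with ((INR k * X + 1 + d) * (d / (INR k * X + 1 + d))).
    - apply Rmult_le_compat_r; [left; apply Rdiv_lt_0_compat; nra | nra].
    - right; field; nra. }
  specialize (h (1 - t) ltac:(lra)). pose proof (bernoulli_ineq t k ltac:(lra)). nra.
Qed.

Lemma le_of_forall_eps_sqr_mul_le X G : 0 <= G ->
  (forall eps, 0 < eps <= 1 -> X <= (1 + eps) * (1 + eps) * G) -> X <= G.
Proof.
  intros hG h. apply Rle_plus_epsilon. intros d hd.
  set (eps := Rmin 1 (d / (3 * G + 1))).
  assert (he : 0 < eps <= 1).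
  { unfold eps. split; [apply Rmin_pos; [lra|apply Rdiv_lt_0_compat; lra]|apply Rmin_l]. }
  assert (he2 : eps * (3 * G + 1) <= d).
  { apply Rle_trans with (d / (3 * G + 1) * (3 * G + 1)).
    - apply Rmult_le_compat_r; [lra|apply Rmin_r].
    - right; field; lra. }
  specialize (h eps he). nra.
Qed.

(* Unlike [sum_f_R0 f N], which has [N + 1] terms, [rsum f N] sums [f s] over [s < N]. *)
Fixpoint rsum (f : nat -> R) (N : nat) : R :=
  match N with O => 0 | S n => rsum f n + f n end.

Lemma rsum_plus f g N : rsum (fun s => f s + g s) N = rsum f N + rsum g N.
Proof. induction N; simpl; [lra|rewrite IHN; lra]. Qed.
Lemma rsum_scal c f N : rsum (fun s => c * f s) N = c * rsum f N.
Proof. induction N; simpl; [lra|rewrite IHN; lra]. Qed.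
Lemma rsum_ext f g N : (forall s, f s = g s) -> rsum f N = rsum g N.
Proof. intros h; induction N; simpl; auto. rewrite IHN, h; auto. Qed.
Lemma rsum_const c N : rsum (fun _ => c) N = INR N * c.
Proof. induction N; simpl rsum; [simpl; lra|]. rewrite IHN, S_INR; lra. Qed.
Lemma rsum_le f g N : (forall s, f s <= g s) -> rsum f N <= rsum g N.
Proof. intros h; induction N; simpl; [lra|]. pose proof (h N); lra. Qed.
Lemma rsum_sum_f_R0 (F : nat -> nat -> R) N D :
  rsum (fun s => sum_f_R0 (fun n => F s n) D) N = sum_f_R0 (fun n => rsum (fun s => F s n) N) D.
Proof.
  induction N; simpl rsum; [rewrite sum_eq_R0; auto|].
  rewrite IHN, <- sum_plus. auto.
Qed.

(** * Convergence and power series *)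

Lemma cv_const c : Un_cv (fun _ => c) c.
Proof. intros eps he. exists 0%nat. intros; unfold Rdist. rewrite Rminus_diag, Rabs_R0. lra. Qed.

Lemma qcv_unique u l1 l2 : qcv u l1 -> qcv u l2 -> l1 = l2.
Proof.
  intros h1 h2.
  assert (E : qnorm (qsub l1 l2) = 0).
  { apply Rle_antisym; [|apply qnorm_ge0]. apply Rle_plus_epsilon; intros eps he.
    destruct (h1 (eps/2)) as [N1 H1]; [lra|]. destruct (h2 (eps/2)) as [N2 H2]; [lra|].
    specialize (H1 (max N1 N2) ltac:(lia)). specialize (H2 (max N1 N2) ltac:(lia)).
    pose proof (qnorm_sub_triangle l1 (u (max N1 N2)) l2). rewrite qnorm_sub_comm in H1. lra. }
  apply qnorm_eq0 in E. replace l1 with (qadd (qsub l1 l2) l2) by qring.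
  rewrite E. apply qadd_0_l.
Qed.

Lemma qcv_ext u v l : (forall n, u n = v n) -> qcv u l -> qcv v l.
Proof. intros e h eps he. destruct (h eps he) as [N HN]. exists N; intros; rewrite <- e; auto. Qed.

Lemma qcv_lipschitz (f : H -> H) k u l : 0 <= k ->
  (forall x y, qnorm (qsub (f x) (f y)) <= k * qnorm (qsub x y)) ->
  qcv u l -> qcv (fun n => f (u n)) (f l).
Proof.
  intros hk hf h eps he. destruct (h (eps / (k + 1))) as [N HN].
  { apply Rdiv_lt_0_compat; lra. }
  exists N; intros n hn. specialize (HN n hn).
  apply (Rmult_lt_compat_l (k + 1)) in HN; [|lra].
  replace ((k + 1) * (eps / (k + 1))) with eps in HN by (field; lra).
  pose proof (hf (u n) l). pose proof (qnorm_ge0 (qsub (u n) l)). nra.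
Qed.

Lemma qcv_mul_l c u l : qcv u l -> qcv (fun n => qmul c (u n)) (qmul c l).
Proof.
  apply (qcv_lipschitz (qmul c) (qnorm c)); [apply qnorm_ge0|]. intros x y.
  replace (qsub (qmul c x) (qmul c y)) with (qmul c (qsub x y)) by qring.
  rewrite qnorm_mul; lra.
Qed.

Lemma qcv_add u v l m : qcv u l -> qcv v m -> qcv (fun n => qadd (u n) (v n)) (qadd l m).
Proof.
  intros h1 h2 eps he. destruct (h1 (eps/2)) as [N1 H1]; [lra|]. destruct (h2 (eps/2)) as [N2 H2]; [lra|].
  exists (max N1 N2); intros n hn. specialize (H1 n ltac:(lia)). specialize (H2 n ltac:(lia)).
  replace (qsub (qadd (u n) (v n)) (qadd l m)) with (qadd (qsub (u n) l) (qsub (v n) m)) by qring.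
  eapply Rle_lt_trans; [apply qnorm_triangle|lra].
Qed.

Lemma qcv_bounded u l : qcv u l -> exists B, forall n, qnorm (u n) <= B.
Proof.
  intros h. destruct (h 1) as [N HN]; [lra|].
  assert (Hfin : forall M, exists B, forall n, (n <= M)%nat -> qnorm (u n) <= B).
  { induction M as [|M [B HB]].
    - exists (qnorm (u 0%nat)). intros n hn. replace n with 0%nat by lia. lra.
    - exists (Rmax B (qnorm (u (S M)))). intros n hn.
      destruct (Nat.eq_dec n (S M)) as [->|ne]; [apply Rmax_r|].
      eapply Rle_trans; [apply HB; lia|apply Rmax_l]. }
  destruct (Hfin N) as [B HB]. exists (Rmax B (qnorm l + 1)). intros n.
  destruct (Nat.le_gt_cases n N).
  - eapply Rle_trans; [apply HB; auto|apply Rmax_l].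
  - specialize (HN n ltac:(lia)). pose proof (qnorm_le_sub (u n) l).
    eapply Rle_trans; [|apply Rmax_r]. lra.
Qed.

Lemma qcv_of_comps u l0 l1 l2 l3 :
  Un_cv (fun n => q0 (u n)) l0 -> Un_cv (fun n => q1 (u n)) l1 ->
  Un_cv (fun n => q2 (u n)) l2 -> Un_cv (fun n => q3 (u n)) l3 -> qcv u (mkH l0 l1 l2 l3).
Proof.
  intros h0 h1 h2 h3 eps he.
  destruct (h0 (eps/4)) as [N0 H0]; [lra|]. destruct (h1 (eps/4)) as [N1 H1]; [lra|].
  destruct (h2 (eps/4)) as [N2 H2]; [lra|]. destruct (h3 (eps/4)) as [N3 H3]; [lra|].
  exists (max (max N0 N1) (max N2 N3)). intros n hn.
  specialize (H0 n ltac:(lia)); specialize (H1 n ltac:(lia));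
  specialize (H2 n ltac:(lia)); specialize (H3 n ltac:(lia)).
  unfold Rdist in *. eapply Rle_lt_trans; [apply qnorm_le_sum_Rabs|]. simpl. lra.
Qed.

Lemma series_cv_of_geometric_bound (t : nat -> R) C x : 0 <= x < 1 ->
  (forall n, Rabs (t n) <= x ^ n * C) -> exists l, Un_cv (fun N => sum_f_R0 t N) l.
Proof.
  intros hx ht.
  assert (G : {l | Un_cv (fun N => sum_f_R0 (fun n => x ^ n * C) N) l}).
  { exists (/ (1 - x) * C). eapply Un_cv_ext; [intros N; apply scal_sum|].
    eapply Un_cv_ext; [intros N; apply Rmult_comm|].
    apply CV_mult; [|apply cv_const].
    eapply Un_cv_ext; [|apply GP_infinite; rewrite Rabs_right; lra].
    intros N; apply sum_eq; intros; ring. }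
  assert (A : {l | Un_cv (fun N => sum_f_R0 (fun n => Rabs (t n)) N) l}).
  { apply (Rseries_CV_comp _ (fun n => x ^ n * C)); auto. intros n; split; auto. apply Rabs_pos. }
  apply cv_cauchy_1, cauchy_abs, cv_cauchy_2 in A. destruct A as [l hl]. eauto.
Qed.

Lemma regular_of_bounded_coef c B : (forall n, qnorm (c n) <= B) -> regular_on_B c.
Proof.
  intros hB q hq.
  assert (hx : 0 <= qnorm q < 1) by (split; auto; apply qnorm_ge0).
  assert (hb : forall n, qnorm (qmul (qpow q n) (c n)) <= qnorm q ^ n * B).
  { intros n. rewrite qnorm_mul, qnorm_qpow.
    apply Rmult_le_compat_l; auto. apply pow_le, qnorm_ge0. }
  pose proof (fun n => Rabs_comp_le_qnorm (qmul (qpow q n) (c n))) as hc.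
  destruct (series_cv_of_geometric_bound (fun n => q0 (qmul (qpow q n) (c n))) B _ hx) as [l0 h0].
  { intros n; eapply Rle_trans; [apply hc|apply hb]. }
  destruct (series_cv_of_geometric_bound (fun n => q1 (qmul (qpow q n) (c n))) B _ hx) as [l1 h1].
  { intros n; eapply Rle_trans; [apply hc|apply hb]. }
  destruct (series_cv_of_geometric_bound (fun n => q2 (qmul (qpow q n) (c n))) B _ hx) as [l2 h2].
  { intros n; eapply Rle_trans; [apply hc|apply hb]. }
  destruct (series_cv_of_geometric_bound (fun n => q3 (qmul (qpow q n) (c n))) B _ hx) as [l3 h3].
  { intros n; eapply Rle_trans; [apply hc|apply hb]. }
  exists (mkH l0 l1 l2 l3). unfold ps_value, psum.
  apply qcv_of_comps; eapply Un_cv_ext; try eassumption; intros; symmetry; apply qsum_comp.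
Qed.

Lemma psum_S psi q n :
  psum psi q (S n) = qadd (psum psi q n) (qmul (qpow q (S n)) (psi (S n))).
Proof. reflexivity. Qed.

Lemma regular_coef_bound psi : regular_on_B psi -> forall r, 0 <= r < 1 ->
  exists C, 0 <= C /\ forall n, r ^ n * qnorm (psi n) <= C.
Proof.
  intros hreg r hr. destruct (hreg (qreal r)) as [l hl]; [rewrite qnorm_qreal; lra|].
  destruct (qcv_bounded _ _ hl) as [B HB].
  assert (B0 : 0 <= B) by (pose proof (HB 0%nat); pose proof (qnorm_ge0 (psum psi (qreal r) 0)); lra).
  exists (2 * B). split; [lra|]. intros n.
  replace (r ^ n * qnorm (psi n)) with (qnorm (qmul (qpow (qreal r) n) (psi n)))
    by (rewrite qnorm_mul, qnorm_qpow, qnorm_qreal; lra).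
  destruct n.
  - pose proof (HB 0%nat) as H0.
    change (psum psi (qreal r) 0) with (qmul (qpow (qreal r) 0) (psi 0%nat)) in H0. lra.
  - replace (qmul (qpow (qreal r) (S n)) (psi (S n)))
      with (qsub (psum psi (qreal r) (S n)) (psum psi (qreal r) n)) by (rewrite psum_S; qring).
    pose proof (qnorm_sub_le (psum psi (qreal r) (S n)) (psum psi (qreal r) n)).
    pose proof (HB n); pose proof (HB (S n)). lra.
Qed.

Lemma psum_sub_geometric psi q C rho K M : 0 <= rho < 1 ->
  (forall n, qnorm (qmul (qpow q n) (psi n)) <= C * rho ^ n) -> (K <= M)%nat ->
  qnorm (qsub (psum psi q M) (psum psi q K)) <= C * (rho ^ S K - rho ^ S M) / (1 - rho).
Proof.
  intros hrho hterm hKM. induction hKM.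
  - rewrite qsub_diag, qnorm_zero. replace (C * (rho ^ S K - rho ^ S K) / (1 - rho)) with 0
      by (field; lra). lra.
  - rewrite psum_S.
    replace (qsub (qadd (psum psi q m) (qmul (qpow q (S m)) (psi (S m)))) (psum psi q K))
      with (qadd (qsub (psum psi q m) (psum psi q K)) (qmul (qpow q (S m)) (psi (S m)))) by qring.
    eapply Rle_trans; [apply qnorm_triangle|]. specialize (hterm (S m)).
    replace (C * (rho ^ S K - rho ^ S (S m)) / (1 - rho))
      with (C * (rho ^ S K - rho ^ S m) / (1 - rho) + C * rho ^ S m) by (simpl; field; lra).
    lra.
Qed.

(* The tail is dominated by a geometric series, via the coefficient bound at radius [(1 + r) / 2]. *)
Lemma regular_tail_uniform psi : regular_on_B psi -> forall r, 0 <= r < 1 -> forall eps, eps > 0 ->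
  exists K0, forall K, (K0 <= K)%nat -> forall q l, qnorm q <= r -> ps_value psi q l ->
  qnorm (qsub l (psum psi q K)) <= eps.
Proof.
  intros hreg r hr eps he.
  set (r' := (1 + r) / 2).
  destruct (regular_coef_bound psi hreg r' ltac:(unfold r'; lra)) as [C [C0 HC]].
  set (rho := r / r').
  assert (hrho : 0 <= rho < 1).
  { unfold rho, r'. split; [apply Rmult_le_pos; [lra|left; apply Rinv_0_lt_compat; lra]|].
    apply Rmult_lt_reg_r with ((1 + r) / 2); [lra|].
    unfold Rdiv. rewrite Rmult_assoc, Rinv_l; lra. }
  assert (Hterm : forall q n, qnorm q <= r -> qnorm (qmul (qpow q n) (psi n)) <= C * rho ^ n).
  { intros q n hq. rewrite qnorm_mul, qnorm_qpow.
    assert (E : r ^ n = rho ^ n * r' ^ n)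
      by (rewrite <- Rpow_mult_distr; f_equal; unfold rho, r'; field; lra).
    apply Rle_trans with (r ^ n * qnorm (psi n)).
    - apply Rmult_le_compat_r; [apply qnorm_ge0|]. apply pow_incr. split; [apply qnorm_ge0|auto].
    - rewrite E, Rmult_assoc, (Rmult_comm C). apply Rmult_le_compat_l; auto. apply pow_le; lra. }
  destruct (pow_lt_1_zero rho ltac:(rewrite Rabs_right; lra) (eps * (1 - rho) / (C + 1)))
    as [K0 HK0]; [apply Rdiv_lt_0_compat; nra|].
  exists K0. intros K hK q l hq hl.
  apply Rle_plus_epsilon. intros d hd. destruct (hl d hd) as [M HM].
  specialize (HM (max M K) ltac:(lia)). rewrite qnorm_sub_comm in HM.
  pose proof (qnorm_sub_triangle l (psum psi q (max M K)) (psum psi q K)).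
  pose proof (psum_sub_geometric psi q C rho K (max M K) hrho (fun n => Hterm q n hq) ltac:(lia)).
  specialize (HK0 (S K) ltac:(lia)). rewrite Rabs_right in HK0 by (apply Rle_ge, pow_le; lra).
  pose proof (pow_le rho (S (max M K)) ltac:(lra)).
  assert (C * (rho ^ S K - rho ^ S (max M K)) / (1 - rho) <= eps).
  { apply Rmult_le_reg_r with (1 - rho); [lra|].
    unfold Rdiv. rewrite Rmult_assoc, Rinv_l by lra.
    assert (rho ^ S K * (C + 1) <= eps * (1 - rho)).
    { apply Rmult_le_reg_r with (/ (C + 1)); [apply Rinv_0_lt_compat; lra|].
      rewrite Rmult_assoc, Rinv_r by lra. unfold Rdiv in HK0. lra. }
    pose proof (pow_le rho (S K) ltac:(lra)). nra. }
  lra.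
Qed.

(** * The *-product and the composition operators *)

Definition one_seq : nat -> H := fun m => match m with O => qone | S _ => qzero end.
Definition seq_conj (a : nat -> H) : nat -> H := fun n => qconj (a n).
Definition shift (a : nat -> H) : nat -> H := fun n => a (S n).
Definition trunc (a : nat -> H) (m : nat) : nat -> H := fun n => if Nat.leb n m then a n else qzero.

Lemma trunc_le a m n : (n <= m)%nat -> trunc a m n = a n.
Proof. intros h; unfold trunc. destruct (Nat.leb_spec n m); auto; lia. Qed.
Lemma trunc_gt a m n : (m < n)%nat -> trunc a m n = qzero.
Proof. intros h; unfold trunc. destruct (Nat.leb_spec n m); auto; lia. Qed.

Lemma psum_trunc psi K D q : (K <= D)%nat -> psum (trunc psi K) q D = psum psi q K.
Proof.
  intros h. unfold psum. rewrite (qsum_trim _ K D h).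
  - apply qsum_ext; intros; rewrite trunc_le; auto.
  - intros i hi. rewrite trunc_gt by lia. apply qmul_0_r.
Qed.

Lemma star_ext a a' b b' n : (forall i, (i <= n)%nat -> a i = a' i) ->
  (forall i, (i <= n)%nat -> b i = b' i) -> star a b n = star a' b' n.
Proof. intros ha hb. unfold star. apply qsum_ext; intros. rewrite ha, hb by lia; auto. Qed.

Lemma star_assoc a b c n : star (star a b) c n = star a (star b c) n.
Proof.
  unfold star.
  set (F := fun i l => qmul (a i) (qmul (b l) (c (n - (i + l))%nat))).
  transitivity (qsum (fun k => qsum (fun i => F i (k - i)%nat) k) n).
  - apply qsum_ext; intros k hk. rewrite qsum_mul_r. apply qsum_ext; intros i hi.
    unfold F. rewrite qmul_assoc. do 3 f_equal. lia.
  - rewrite (qsum_antidiagonal F). unfold F. apply qsum_ext; intros i hi.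
    rewrite qsum_mul_l. apply qsum_ext; intros j hj. do 3 f_equal. lia.
Qed.

Lemma star_one_l a m : star one_seq a m = a m.
Proof.
  unfold star. rewrite (qsum_trim _ 0 m); [simpl; rewrite qmul_1_l; f_equal; lia | lia |].
  intros [|i] hi; [lia|]. apply qmul_0_l.
Qed.
Lemma star_one_r a m : star a one_seq m = a m.
Proof.
  unfold star. rewrite qsum_rev.
  rewrite (qsum_ext _ (fun k => qmul (a (m - k)%nat) (one_seq k)))
    by (intros i hi; do 2 f_equal; lia).
  rewrite (qsum_trim _ 0 m); [simpl; rewrite qmul_1_r; f_equal; lia | lia |].
  intros [|i] hi; [lia|]. apply qmul_0_r.
Qed.

Lemma starpow_comm b n m : star b (starpow b n) m = star (starpow b n) b m.
Proof.
  revert m; induction n; intros m.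
  - change (starpow b 0) with one_seq. rewrite star_one_l, star_one_r. auto.
  - simpl starpow. rewrite star_assoc. apply star_ext; auto.
Qed.

Lemma star_conj a b n : qconj (star a b n) = star (seq_conj b) (seq_conj a) n.
Proof.
  unfold star, seq_conj. rewrite qsum_conj, qsum_rev. apply qsum_ext; intros.
  rewrite qconj_mul. do 3 f_equal. lia.
Qed.

Section VanishingAtZero.
Variable b : nat -> H.
Hypothesis hb : b 0%nat = qzero.

Lemma starpow_vanish n m : (m < n)%nat -> starpow b n m = qzero.
Proof.
  revert m; induction n; intros m hm; [lia|].
  simpl. unfold star. apply qsum_eq_zero. intros [|k] hk.
  - rewrite hb; apply qmul_0_l.
  - rewrite IHn by lia. apply qmul_0_r.
Qed.

Lemma star_l_0 g : star b g 0 = qzero.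
Proof. unfold star; simpl. rewrite hb; apply qmul_0_l. Qed.
Lemma star_r_0 g : star g b 0 = qzero.
Proof. unfold star; simpl. rewrite hb; apply qmul_0_r. Qed.

Lemma star_l_trunc g m N : (N <= S m)%nat -> star b g N = star b (trunc g m) N.
Proof.
  intros hN. unfold star. apply qsum_ext; intros [|k] hk.
  - rewrite hb, !qmul_0_l; auto.
  - rewrite trunc_le by lia. auto.
Qed.
Lemma star_r_trunc g m N : (N <= S m)%nat -> star g b N = star (trunc g m) b N.
Proof.
  intros hN. unfold star. apply qsum_ext; intros k hk. destruct (Nat.eq_dec k N).
  - subst. rewrite Nat.sub_diag, hb, !qmul_0_r; auto.
  - rewrite trunc_le by lia. auto.
Qed.

Lemma Cop_0 a : Cop b a 0 = a 0%nat.
Proof. unfold Cop; simpl. apply qmul_1_l. Qed.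
Lemma Dop_0 a : Dop b a 0 = a 0%nat.
Proof. unfold Dop; simpl. apply qmul_1_r. Qed.

Lemma Cop_S a m : Cop b a (S m) = star b (Cop b (shift a)) (S m).
Proof.
  unfold Cop at 1. rewrite qsum_Sl.
  change (starpow b 0 (S m)) with qzero. rewrite qmul_0_l, qadd_0_l.
  transitivity (qsum (fun n => qsum (fun k =>
    qmul (b k) (qmul (starpow b n (S m - k)%nat) (a (S n)))) (S m)) (S m)).
  - rewrite (qsum_trim _ m (S m)); [ | lia | ].
    + apply qsum_ext; intros n hn. simpl starpow. unfold star. rewrite qsum_mul_r.
      apply qsum_ext; intros. apply eq_sym, qmul_assoc.
    + intros i hi. replace i with (S m) by lia. apply qsum_eq_zero. intros [|k] hk.
      * rewrite hb; apply qmul_0_l.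
      * rewrite (starpow_vanish (S m)), qmul_0_l, qmul_0_r by lia. reflexivity.
  - rewrite qsum_exchange. unfold star. apply qsum_ext; intros k hk.
    unfold Cop. rewrite qsum_mul_l. apply qsum_trim; [lia|].
    intros i hi. rewrite (starpow_vanish i), qmul_0_l, qmul_0_r by lia. reflexivity.
Qed.

Lemma Dop_S a m : Dop b a (S m) = star (Dop b (shift a)) b (S m).
Proof.
  unfold Dop at 1. rewrite qsum_Sl.
  change (starpow b 0 (S m)) with qzero. rewrite qmul_0_r, qadd_0_l.
  transitivity (qsum (fun n => qsum (fun k =>
    qmul (qmul (a (S n)) (starpow b n k)) (b (S m - k)%nat)) (S m)) (S m)).
  - rewrite (qsum_trim _ m (S m)); [ | lia | ].
    + apply qsum_ext; intros n hn. simpl starpow. rewrite starpow_comm. unfold star.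
      rewrite qsum_mul_l. apply qsum_ext; intros. apply qmul_assoc.
    + intros i hi. replace i with (S m) by lia. apply qsum_eq_zero. intros k hk.
      destruct (Nat.eq_dec k (S m)).
      * subst. rewrite Nat.sub_diag, hb; apply qmul_0_r.
      * rewrite (starpow_vanish (S m)), qmul_0_r, qmul_0_l by lia. reflexivity.
  - rewrite qsum_exchange. unfold star. apply qsum_ext; intros k hk.
    unfold Dop. rewrite qsum_mul_r. apply qsum_trim; [lia|].
    intros i hi. rewrite (starpow_vanish i), qmul_0_r, qmul_0_l by lia. reflexivity.
Qed.
End VanishingAtZero.

Lemma Cop_one_seq b m : Cop b one_seq m = one_seq m.
Proof.
  unfold Cop. rewrite (qsum_trim _ 0 m); [simpl; apply qmul_1_r | lia |].
  intros [|i] hi; [lia|]. apply qmul_0_r.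
Qed.
Lemma Dop_one_seq b m : Dop b one_seq m = one_seq m.
Proof.
  unfold Dop. rewrite (qsum_trim _ 0 m); [simpl; apply qmul_1_l | lia |].
  intros [|i] hi; [lia|]. apply qmul_0_l.
Qed.

(** * Sampling at roots of unity *)

Definition partial_norm2 (a : nat -> H) (m : nat) : R := sum_f_R0 (fun n => qnorm2 (a n)) m.
Definition weighted_norm2 (r : R) (a : nat -> H) (m : nat) : R :=
  sum_f_R0 (fun n => r ^ n * r ^ n * qnorm2 (a n)) m.

Definition polar (r t : R) : H := mkH (r * cos t) (r * sin t) 0 0.
Definition root_angle (N s : nat) : R := 2 * PI * INR s / INR N.

Lemma qnorm_polar r t : 0 <= r -> qnorm (polar r t) = r.
Proof.
  intros h. rewrite qnorm_sqrt. unfold qnorm2, polar; simpl.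
  replace (r * cos t * (r * cos t) + r * sin t * (r * sin t) + 0 * 0 + 0 * 0)
    with (r * r * (Rsqr (sin t) + Rsqr (cos t))) by (unfold Rsqr; ring).
  rewrite sin2_cos2, Rmult_1_r. apply sqrt_square; auto.
Qed.

Lemma qpow_polar r t n : qpow (polar r t) n = polar (r ^ n) (INR n * t).
Proof.
  induction n; simpl qpow.
  - unfold polar. rewrite Rmult_0_l, cos_0, sin_0. apply H_ext; simpl; ring.
  - rewrite IHn, S_INR. unfold polar.
    replace ((INR n + 1) * t) with (t + INR n * t) by ring.
    apply H_ext; simpl; rewrite ?cos_plus, ?sin_plus; ring.
Qed.

Lemma sum_cos_telescope x N :
  2 * sin (x / 2) * rsum (fun s => cos (INR s * x)) N = sin ((INR N - 1/2) * x) + sin (x / 2).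
Proof.
  induction N; simpl rsum.
  - simpl INR. replace ((0 - 1/2) * x) with (- (x/2)) by field. rewrite sin_neg. lra.
  - rewrite Rmult_plus_distr_l, IHN, S_INR.
    replace ((INR N + 1 - 1/2) * x) with (INR N * x + x/2) by field.
    replace ((INR N - 1/2) * x) with (INR N * x - x/2) by field.
    rewrite sin_plus, sin_minus. ring.
Qed.
Lemma sum_sin_telescope x N :
  2 * sin (x / 2) * rsum (fun s => sin (INR s * x)) N = cos (x / 2) - cos ((INR N - 1/2) * x).
Proof.
  induction N; simpl rsum.
  - simpl INR. replace ((0 - 1/2) * x) with (- (x/2)) by field. rewrite cos_neg. lra.
  - rewrite Rmult_plus_distr_l, IHN, S_INR.
    replace ((INR N + 1 - 1/2) * x) with (INR N * x + x/2) by field.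
    replace ((INR N - 1/2) * x) with (INR N * x - x/2) by field.
    rewrite cos_plus, cos_minus. ring.
Qed.

Lemma sum_roots_of_unity N m : (0 < m < N)%nat ->
  rsum (fun s => cos (INR m * root_angle N s)) N = 0 /\
  rsum (fun s => sin (INR m * root_angle N s)) N = 0.
Proof.
  intros hm. set (x := 2 * PI * INR m / INR N).
  assert (hN : 0 < INR N) by (apply lt_0_INR; lia).
  assert (hm0 : 0 < INR m) by (apply lt_0_INR; lia).
  assert (hmN : INR m < INR N) by (apply lt_INR; lia).
  assert (E : forall s, INR m * root_angle N s = INR s * x)
    by (intros; unfold root_angle, x; field; lra).
  assert (hs : 0 < sin (x/2)).
  { assert (0 < INR m / INR N < 1).
    { split; [apply Rdiv_lt_0_compat; lra|].
      apply Rmult_lt_reg_r with (INR N); [lra|]. field_simplify; lra. }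
    replace (x/2) with (PI * (INR m / INR N)) by (unfold x; field; lra).
    pose proof PI_RGT_0. apply sin_gt_0; nra. }
  assert (E2 : (INR N - 1/2) * x = - (x/2) + 2 * INR m * PI) by (unfold x; field; lra).
  rewrite (rsum_ext _ (fun s => cos (INR s * x))), (rsum_ext (fun s => sin _) (fun s => sin (INR s * x)))
    by (intros; rewrite E; auto).
  split.
  - pose proof (sum_cos_telescope x N) as T. rewrite E2, sin_period, sin_neg in T. nra.
  - pose proof (sum_sin_telescope x N) as T. rewrite E2, cos_period, cos_neg in T. nra.
Qed.

Lemma roots_of_unity_orthogonality N n k : (n < N)%nat -> (k < N)%nat ->
  rsum (fun s => cos ((INR n - INR k) * root_angle N s)) N = (if Nat.eq_dec n k then INR N else 0) /\
  rsum (fun s => sin ((INR n - INR k) * root_angle N s)) N = 0.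
Proof.
  intros hn hk. destruct (Nat.eq_dec n k) as [<-|ne].
  - rewrite Rminus_diag.
    rewrite (rsum_ext _ (fun _ => 1)), (rsum_ext (fun s => sin _) (fun _ => 0)), !rsum_const
      by (intros; rewrite Rmult_0_l; apply sin_0 || apply cos_0). lra.
  - destruct (Nat.lt_ge_cases n k) as [h|h].
    + destruct (sum_roots_of_unity N (k - n)) as [A B]; [lia|].
      rewrite minus_INR in A, B by lia. split.
      * rewrite <- A. apply rsum_ext; intros. rewrite <- cos_neg. f_equal; ring.
      * rewrite (rsum_ext _ (fun s => -1 * sin ((INR k - INR n) * root_angle N s))),
          rsum_scal, B by (intros; replace (-1 * _) with (- sin ((INR k - INR n) * root_angle N s)) by ring; rewrite <- sin_neg; f_equal; ring).
        ring.
    + destruct (sum_roots_of_unity N (n - k)) as [A B]; [lia|].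
      rewrite minus_INR in A, B by lia. auto.
Qed.

Lemma qdot_complex_mul a b a' b' c d :
  qdot (qmul (mkH a b 0 0) c) (qmul (mkH a' b' 0 0) d) =
  (a * a' + b * b') * qdot c d + (a' * b - a * b') * qdot (qmul qi c) d.
Proof. destruct c, d; unfold qdot, qmul, qi; simpl; ring. Qed.

Lemma discrete_parseval c D N r : (D < N)%nat ->
  rsum (fun s => qnorm2 (psum c (polar r (root_angle N s)) D)) N = INR N * weighted_norm2 r c D.
Proof.
  intros hD. unfold psum, weighted_norm2.
  set (cs := fun (f : R -> R) n k => rsum (fun s => f ((INR n - INR k) * root_angle N s)) N).
  rewrite (rsum_ext _ (fun s => sum_f_R0 (fun n => sum_f_R0 (fun k =>
     r ^ n * r ^ k * (cos ((INR n - INR k) * root_angle N s) * qdot (c n) (c k) +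
                      sin ((INR n - INR k) * root_angle N s) * qdot (qmul qi (c n)) (c k))) D) D)).
  2: { intros s. rewrite qnorm2_qsum. apply sum_eq; intros n _. apply sum_eq; intros k _.
       rewrite !qpow_polar. unfold polar. rewrite qdot_complex_mul.
       replace ((INR n - INR k) * root_angle N s) with (INR n * root_angle N s - INR k * root_angle N s)
         by ring.
       rewrite cos_minus, sin_minus. ring. }
  rewrite rsum_sum_f_R0, scal_sum. apply sum_eq; intros n hn.
  rewrite rsum_sum_f_R0.
  rewrite (sum_eq _ (fun k => r ^ n * r ^ k *
     (qdot (c n) (c k) * cs cos n k + qdot (qmul qi (c n)) (c k) * cs sin n k))).
  2: { intros k _. unfold cs. rewrite <- !rsum_scal, <- rsum_plus, <- rsum_scal.
       apply rsum_ext; intros; ring. }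
  rewrite (sum_f_R0_single _ D n); auto.
  - destruct (roots_of_unity_orthogonality N n n) as [A B]; try lia. unfold cs. rewrite A, B.
    destruct (Nat.eq_dec n n); [|congruence]. unfold qnorm2, qdot. ring.
  - intros k hk hkn. destruct (roots_of_unity_orthogonality N n k) as [A B]; try lia.
    unfold cs. rewrite A, B. destruct (Nat.eq_dec n k); [congruence|]. ring.
Qed.

(** * Right *-multiplication by a Schur function *)

Definition schur_class (psi : nat -> H) : Prop :=
  forall q, qnorm q < 1 -> exists l, ps_value psi q l /\ qnorm l <= 1.

Lemma schur_class_regular psi : schur_class psi -> regular_on_B psi.
Proof. intros h q hq. destruct (h q hq) as [l [hl _]]; eauto. Qed.

Lemma regular_B_to_B_schur_class psi : regular_B_to_B psi -> schur_class psi.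
Proof. intros h q hq. destruct (h q hq) as [l [hl hl1]]. exists l; split; auto; lra. Qed.

Lemma qpow_intertwine Y q z n : qmul Y q = qmul z Y -> qmul Y (qpow q n) = qmul (qpow z n) Y.
Proof.
  intros h. induction n; simpl; [rewrite qmul_1_l, qmul_1_r; auto|].
  rewrite qmul_assoc, h, <- qmul_assoc, IHn. apply qmul_assoc.
Qed.

Lemma psum_intertwine Y q z psi K : qmul Y q = qmul z Y ->
  qmul Y (psum psi q K) = qsum (fun l => qmul (qpow z l) (qmul Y (psi l))) K.
Proof.
  intros h. unfold psum. rewrite qsum_mul_l. apply qsum_ext; intros l _.
  rewrite qmul_assoc, (qpow_intertwine Y q z l h). apply eq_sym, qmul_assoc.
Qed.

Lemma conjugate_point Y z : qnorm2 Y <> 0 ->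
  exists q, qmul Y q = qmul z Y /\ qnorm q = qnorm z.
Proof.
  intros h. exists (qmul (qinv Y) (qmul z Y)). split.
  - rewrite qmul_assoc, qmul_qinv_r, qmul_1_l; auto.
  - rewrite !qnorm_sqrt, !qnorm2_mul, qnorm2_qinv by auto. f_equal. field; auto.
Qed.

(* The product formula [(g * psi)(z) = g(z) psi(g(z)^-1 z g(z))], for polynomials. *)
Lemma psum_star_trunc g psi m K z :
  psum (star (trunc g m) (trunc psi K)) z (m + K) =
  qsum (fun l => qmul (qpow z l) (qmul (psum (trunc g m) z (m + K)) (trunc psi K l))) (m + K).
Proof.
  set (D := (m + K)%nat).
  set (F := fun k l => qmul (qpow z (k + l)) (qmul (trunc g m k) (trunc psi K l))).
  transitivity (qsum (fun n => qsum (fun k => F k (n - k)%nat) n) D).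
  - unfold psum, star. apply qsum_ext; intros n hn. rewrite qsum_mul_l.
    apply qsum_ext; intros k hk. unfold F. do 3 f_equal. lia.
  - rewrite qsum_antidiagonal.
    transitivity (qsum (fun k => qsum (fun l => F k l) D) D).
    + apply qsum_ext; intros k hk. symmetry. apply qsum_trim; [lia|].
      intros l hl. unfold F. destruct (Nat.le_gt_cases k m).
      * rewrite (trunc_gt psi K l), !qmul_0_r by (unfold D in *; lia). reflexivity.
      * rewrite (trunc_gt g m k), qmul_0_l, qmul_0_r by lia. reflexivity.
    + rewrite qsum_exchange. apply qsum_ext; intros l hl. unfold psum.
      rewrite qsum_mul_r, qsum_mul_l. apply qsum_ext; intros k hk. unfold F.
      rewrite Nat.add_comm, qpow_add, !qmul_assoc. reflexivity.
Qed.

Lemma psum_star_trunc_bound psi g m K r eps z : schur_class psi -> r < 1 -> qnorm z <= r ->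
  (forall q l, qnorm q <= r -> ps_value psi q l -> qnorm (qsub l (psum psi q K)) <= eps) ->
  qnorm2 (psum (star (trunc g m) (trunc psi K)) z (m + K)) <=
  (1 + eps) * (1 + eps) * qnorm2 (psum (trunc g m) z (m + K)).
Proof.
  intros hpsi hr hz htail. rewrite psum_star_trunc.
  set (Y := psum (trunc g m) z (m + K)).
  destruct (Req_dec (qnorm2 Y) 0) as [e|ne].
  - apply qnorm2_eq0 in e. rewrite e, qsum_eq_zero, qnorm2_zero; [lra|].
    intros; rewrite qmul_0_l; apply qmul_0_r.
  - destruct (conjugate_point Y z ne) as [q [hYq hq]].
    rewrite <- (psum_intertwine Y q z (trunc psi K) (m + K) hYq), psum_trunc, qnorm2_mul by lia.
    destruct (hpsi q ltac:(lra)) as [l [hl hl1]].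
    specialize (htail q l ltac:(lra) hl).
    assert (HH : qnorm (psum psi q K) <= 1 + eps).
    { pose proof (qnorm_le_sub (psum psi q K) l). rewrite qnorm_sub_comm in htail. lra. }
    apply qnorm2_le_of_qnorm in HH. pose proof (qnorm2_ge0 Y). nra.
Qed.

Lemma weighted_norm2_ge0 r a m : weighted_norm2 r a m >= 0.
Proof.
  apply Rle_ge, cond_pos_sum; intros n.
  pose proof (qnorm2_ge0 (a n)). pose proof (pow2_ge_0 (r ^ n)). simpl in *. nra.
Qed.

Lemma weighted_norm2_le_ext r a b m D : (m <= D)%nat -> (forall n, (n <= m)%nat -> a n = b n) ->
  weighted_norm2 r a m <= weighted_norm2 r b D.
Proof.
  intros hmD hab. unfold weighted_norm2.
  rewrite (sum_eq _ (fun n => r ^ n * r ^ n * qnorm2 (b n))) by (intros; rewrite hab; auto).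
  apply sum_f_R0_mono; auto. intros n.
  pose proof (qnorm2_ge0 (b n)). pose proof (pow2_ge_0 (r ^ n)). simpl in *. nra.
Qed.

Lemma weighted_norm2_trunc r g m D : (m <= D)%nat -> weighted_norm2 r (trunc g m) D = weighted_norm2 r g m.
Proof.
  intros h; induction h; unfold weighted_norm2 in *.
  - apply sum_eq; intros; rewrite trunc_le; auto.
  - simpl. rewrite IHh, trunc_gt, qnorm2_zero by lia. ring.
Qed.

Lemma weighted_star_r_bound_tail psi g m K r eps : schur_class psi -> 0 <= r < 1 -> (m <= K)%nat ->
  (forall q l, qnorm q <= r -> ps_value psi q l -> qnorm (qsub l (psum psi q K)) <= eps) ->
  weighted_norm2 r (star g psi) m <= (1 + eps) * (1 + eps) * weighted_norm2 r g m.
Proof.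
  intros hpsi hr hmK htail.
  set (D := (m + K)%nat).
  assert (HN : 0 < INR (S D)) by (apply lt_0_INR; lia).
  assert (Hle : rsum (fun s => qnorm2 (psum (star (trunc g m) (trunc psi K)) (polar r (root_angle (S D) s)) D)) (S D)
             <= (1 + eps) * (1 + eps) * rsum (fun s => qnorm2 (psum (trunc g m) (polar r (root_angle (S D) s)) D)) (S D)).
  { rewrite <- rsum_scal. apply rsum_le. intros s.
    apply (psum_star_trunc_bound psi g m K r); auto; [lra|]. rewrite qnorm_polar; lra. }
  rewrite !discrete_parseval, weighted_norm2_trunc in Hle by (unfold D; lia).
  assert (E : weighted_norm2 r (star g psi) m <= weighted_norm2 r (star (trunc g m) (trunc psi K)) D).
  { apply weighted_norm2_le_ext; [unfold D; lia|]. intros n hn.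
    apply star_ext; intros; rewrite trunc_le by lia; auto. }
  apply Rmult_le_reg_l with (INR (S D)); nra.
Qed.

Lemma weighted_star_r_bound psi g m r : schur_class psi -> 0 <= r < 1 ->
  weighted_norm2 r (star g psi) m <= weighted_norm2 r g m.
Proof.
  intros hpsi hr. pose proof (weighted_norm2_ge0 r g m).
  apply le_of_forall_eps_sqr_mul_le; [lra|]. intros eps he.
  destruct (regular_tail_uniform psi (schur_class_regular psi hpsi) r hr eps ltac:(lra)) as [K0 HK0].
  apply (weighted_star_r_bound_tail psi g m (max m K0)); auto; [lia|]. apply HK0; lia.
Qed.

Lemma star_r_contraction psi g m : schur_class psi ->
  partial_norm2 (star g psi) m <= partial_norm2 g m.
Proof.
  intros hpsi. apply (le_of_forall_pow_mul_le (m + m)); [apply cond_pos_sum; intros; apply qnorm2_ge0|].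
  intros r hr. pose proof (weighted_star_r_bound psi g m r hpsi hr) as HB.
  assert (Hr : forall i, (i <= m)%nat -> r ^ (m + m) <= r ^ i * r ^ i <= 1).
  { intros i hi. rewrite <- pow_add. split.
    - apply pow_le_pow_le1; [lra|lia].
    - rewrite <- (pow1 (i + i)). apply pow_incr; lra. }
  apply Rle_trans with (weighted_norm2 r (star g psi) m).
  - unfold partial_norm2, weighted_norm2. rewrite scal_sum. apply sum_Rle; intros i hi.
    pose proof (qnorm2_ge0 (star g psi i)). pose proof (Hr i hi). nra.
  - eapply Rle_trans; [apply HB|]. unfold partial_norm2, weighted_norm2. apply sum_Rle; intros i hi.
    pose proof (qnorm2_ge0 (g i)). pose proof (Hr i hi). nra.
Qed.

(** * Conjugating the coefficients *)

Record cplx := Cplx { re : R; im : R }.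
Definition cmul (a b : cplx) := Cplx (re a * re b - im a * im b) (re a * im b + im a * re b).
Definition cadd (a b : cplx) := Cplx (re a + re b) (im a + im b).
Definition cnorm2 (a : cplx) := re a * re a + im a * im a.

(* [|(w1, w2) M|^2] and [|M (v1, v2)^T|^2] for the complex matrix [M = (m_ij)]. *)
Definition row_norm2 (m11 m12 m21 m22 w1 w2 : cplx) : R :=
  cnorm2 (cadd (cmul w1 m11) (cmul w2 m21)) + cnorm2 (cadd (cmul w1 m12) (cmul w2 m22)).
Definition col_norm2 (m11 m12 m21 m22 v1 v2 : cplx) : R :=
  cnorm2 (cadd (cmul m11 v1) (cmul m12 v2)) + cnorm2 (cadd (cmul m21 v1) (cmul m22 v2)).

Lemma psd2_of_form_nonneg (h11 h22 hr hi : R) :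
  (forall x1 x2 y1 y2, 0 <= h11 * (x1*x1+x2*x2) + h22 * (y1*y1+y2*y2) +
     2 * (hr * (x1*y1 + x2*y2) + hi * (x2*y1 - x1*y2))) ->
  0 <= h11 /\ 0 <= h22 /\ hr*hr + hi*hi <= h11 * h22.
Proof.
  intros h.
  assert (A : 0 <= h11) by (specialize (h 1 0 0 0); lra).
  assert (B : 0 <= h22) by (specialize (h 0 0 1 0); lra).
  repeat split; auto.
  destruct (Rle_lt_or_eq_dec 0 h22 B) as [hp|<-].
  - specialize (h h22 0 (- hr) hi).
    apply Rmult_le_reg_l with h22; auto. nra.
  - destruct (Req_dec (hr*hr+hi*hi) 0) as [e|ne]; [lra|exfalso].
    set (s := hr*hr+hi*hi). assert (sp : 0 < s) by (unfold s; nra).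
    set (t := s / (h11 + 1)). assert (tp : 0 < t) by (unfold t; apply Rdiv_lt_0_compat; lra).
    specialize (h t 0 (- hr) hi).
    assert (h11 * t < 2 * s).
    { unfold t. apply Rle_lt_trans with s; [|lra]. apply Rmult_le_reg_r with (h11 + 1); [lra|].
      unfold Rdiv. field_simplify; nra. }
    unfold s in *. nra.
Qed.

Lemma form_nonneg_of_psd2 (k11 k22 fr fi : R) :
  0 <= k11 -> 0 <= k22 -> fr*fr + fi*fi <= k11 * k22 ->
  forall x1 x2 y1 y2, 0 <= k11 * (x1*x1+x2*x2) + k22 * (y1*y1+y2*y2) -
     2 * (fr * (x1*y1 + x2*y2) - fi * (x2*y1 - x1*y2)).
Proof.
  intros h1 h2 h3 x1 x2 y1 y2.
  set (a := x1*x1+x2*x2). set (b := y1*y1+y2*y2).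
  set (X := fr * (x1*y1 + x2*y2) - fi * (x2*y1 - x1*y2)).
  assert (ha : 0 <= a) by (unfold a; nra). assert (hb : 0 <= b) by (unfold b; nra).
  assert (L : X * X <= (fr*fr+fi*fi) * (a * b)).
  { unfold X, a, b. pose proof (pow2_ge_0 (fi * (x1*y1 + x2*y2) + fr * (x2*y1 - x1*y2))). nra. }
  assert (L2 : X * X <= k11 * k22 * (a * b)).
  { apply Rle_trans with ((fr*fr+fi*fi) * (a * b)); auto. apply Rmult_le_compat_r; nra. }
  assert (L3 : 4 * (k11 * k22 * (a * b)) <= (k11 * a + k22 * b) * (k11 * a + k22 * b))
    by (pose proof (pow2_ge_0 (k11 * a - k22 * b)); nra).
  assert (0 <= k11 * a + k22 * b) by nra.
  destruct (Rle_or_lt X 0); nra.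
Qed.

(* A matrix and its transpose have the same operator norm: [I - M M^*] and [I - M^* M] have
   the same trace and determinant, hence are positive semidefinite together. *)
Lemma col_contraction_of_row_contraction m11 m12 m21 m22 :
  (forall w1 w2, row_norm2 m11 m12 m21 m22 w1 w2 <= cnorm2 w1 + cnorm2 w2) ->
  forall v1 v2, col_norm2 m11 m12 m21 m22 v1 v2 <= cnorm2 v1 + cnorm2 v2.
Proof.
  intros h v1 v2.
  destruct m11 as [a1 a2], m12 as [b1 b2], m21 as [c1 c2], m22 as [d1 d2].
  set (h11 := 1 - (a1*a1+a2*a2) - (b1*b1+b2*b2)).
  set (h22 := 1 - (c1*c1+c2*c2) - (d1*d1+d2*d2)).
  set (gr := a1*c1 + a2*c2 + b1*d1 + b2*d2).
  set (gi := a2*c1 - a1*c2 + b2*d1 - b1*d2).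
  assert (HP : forall x1 x2 y1 y2, 0 <= h11 * (x1*x1+x2*x2) + h22 * (y1*y1+y2*y2) +
     2 * ((- gr) * (x1*y1 + x2*y2) + gi * (x2*y1 - x1*y2))).
  { intros x1 x2 y1 y2. specialize (h (Cplx x1 x2) (Cplx y1 y2)).
    unfold row_norm2, cnorm2, cadd, cmul in h; simpl in h. unfold h11, h22, gr, gi. nra. }
  destruct (psd2_of_form_nonneg _ _ _ _ HP) as [P1 [P2 P3]].
  set (k11 := 1 - (a1*a1+a2*a2) - (c1*c1+c2*c2)).
  set (k22 := 1 - (b1*b1+b2*b2) - (d1*d1+d2*d2)).
  set (fr := a1*b1 + a2*b2 + c1*d1 + c2*d2).
  set (fi := a2*b1 - a1*b2 + c2*d1 - c1*d2).
  assert (T : k11 + k22 = h11 + h22) by (unfold k11, k22, h11, h22; ring).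
  assert (D : k11 * k22 - (fr*fr+fi*fi) = h11 * h22 - (gr*gr + gi*gi))
    by (unfold k11, k22, h11, h22, fr, fi, gr, gi; ring).
  assert (K : 0 <= k11 /\ 0 <= k22).
  { assert (0 <= k11 * k22) by (pose proof (Rle_0_sqr fr); pose proof (Rle_0_sqr fi); unfold Rsqr in *; nra).
    nra. }
  destruct K as [K1 K2].
  pose proof (form_nonneg_of_psd2 k11 k22 fr fi K1 K2 ltac:(lra) (re v1) (im v1) (re v2) (im v2)) as C.
  destruct v1 as [x1 x2], v2 as [y1 y2]. unfold col_norm2, cnorm2, cadd, cmul; simpl in *.
  unfold k11, k22, fr, fi in C. nra.
Qed.

Definition cpart (Y : H) : H := mkH (q0 Y) (q1 Y) 0 0.
Definition jpart (Y : H) : H := mkH 0 0 (q2 Y) (q3 Y).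
(* For [P = f(z)] and [Q = f(conj z)], [z] in [C_i], this is the value at [z] of the series
   with conjugated coefficients. *)
Definition conj_value (P Q : H) : H := mkH (q0 Q) (- q1 Q) (- q2 P) (- q3 P).

Lemma qpow_complex a b n :
  q2 (qpow (mkH a b 0 0) n) = 0 /\ q3 (qpow (mkH a b 0 0) n) = 0 /\
  qpow (mkH a (-b) 0 0) n = qconj (qpow (mkH a b 0 0) n).
Proof.
  induction n as [|n [A [B C]]]; simpl; [repeat split; apply H_ext; simpl; ring|].
  rewrite C. destruct (qpow (mkH a b 0 0) n) as [x y u v]. simpl in *. subst.
  repeat split; try ring. apply H_ext; simpl; ring.
Qed.

(* The representation formula: a regular function on the 2-sphere [x + S |y|] is determined
   by its values at [x + i y] and [x - i y]. *)
Lemma psum_splitting Y q a b psi N : qmul Y q = qmul (mkH a b 0 0) Y ->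
  qmul Y (psum psi q N) =
  qadd (qmul (cpart Y) (psum psi (mkH a b 0 0) N)) (qmul (jpart Y) (psum psi (mkH a (-b) 0 0) N)).
Proof.
  intros h. rewrite (psum_intertwine Y q (mkH a b 0 0)) by auto.
  unfold psum. rewrite !qsum_mul_l, <- qsum_add.
  apply qsum_ext; intros n _. destruct (qpow_complex a b n) as [A [B C]]. rewrite C.
  destruct (qpow (mkH a b 0 0) n) as [x y u v]. simpl in A, B. subst. destruct Y, (psi n).
  unfold cpart, jpart. apply H_ext; unfold qmul, qconj; simpl; ring.
Qed.

Lemma value_splitting Y q a b psi lq lz lzb : qmul Y q = qmul (mkH a b 0 0) Y ->
  ps_value psi q lq -> ps_value psi (mkH a b 0 0) lz -> ps_value psi (mkH a (-b) 0 0) lzb ->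
  qmul Y lq = qadd (qmul (cpart Y) lz) (qmul (jpart Y) lzb).
Proof.
  intros hY h1 h2 h3. eapply qcv_unique; [apply (qcv_mul_l Y _ _ h1)|].
  apply (qcv_ext (fun n => qadd (qmul (cpart Y) (psum psi (mkH a b 0 0) n))
                                (qmul (jpart Y) (psum psi (mkH a (-b) 0 0) n)))).
  - intros n. symmetry. apply psum_splitting; auto.
  - apply qcv_add; apply qcv_mul_l; auto.
Qed.

Definition qim_norm (q : H) : R := sqrt (q1 q * q1 q + q2 q * q2 q + q3 q * q3 q).

Lemma slice_intertwiner_exists q : exists Y, qnorm2 Y <> 0 /\
  qmul Y q = qmul (mkH (q0 q) (qim_norm q) 0 0) Y.
Proof.
  destruct q as [x u v w]; unfold qim_norm; simpl. set (s := sqrt (u*u+v*v+w*w)).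
  assert (hs : s * s = u*u+v*v+w*w) by (unfold s; apply sqrt_sqrt; nra).
  assert (hs0 : 0 <= s) by apply sqrt_pos.
  destruct (Req_dec (s + u) 0) as [e|ne].
  - assert (v = 0 /\ w = 0) as [-> ->] by nra.
    exists qj. split; [unfold qnorm2, qj; simpl; lra|]. apply H_ext; unfold qj, qmul; simpl; nra.
  - exists (mkH (s + u) 0 w (- v)). split; [unfold qnorm2; simpl; nra|].
    apply H_ext; unfold qmul; simpl; nra.
Qed.

Lemma qnorm_slice_points q :
  qnorm (mkH (q0 q) (qim_norm q) 0 0) = qnorm q /\ qnorm (mkH (q0 q) (- qim_norm q) 0 0) = qnorm q.
Proof.
  assert (hs : qim_norm q * qim_norm q = q1 q * q1 q + q2 q * q2 q + q3 q * q3 q)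
    by (apply sqrt_sqrt; nra).
  split; rewrite !qnorm_sqrt; f_equal; unfold qnorm2; simpl; nra.
Qed.

Lemma splitting_as_row P Q Y :
  qnorm2 (qadd (qmul (cpart Y) P) (qmul (jpart Y) Q)) =
  row_norm2 (Cplx (q0 P) (q1 P)) (Cplx (q2 P) (q3 P)) (Cplx (- q2 Q) (q3 Q)) (Cplx (q0 Q) (- q1 Q))
            (Cplx (q0 Y) (q1 Y)) (Cplx (q2 Y) (q3 Y)).
Proof.
  destruct P, Q, Y; unfold qnorm2, cpart, jpart, qmul, qadd, row_norm2, cnorm2, cadd, cmul; simpl; ring.
Qed.

Lemma splitting_conj_as_col P Q Y :
  qnorm2 (qadd (qmul (cpart Y) (conj_value P Q)) (qmul (jpart Y) (conj_value Q P))) =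
  col_norm2 (Cplx (q0 P) (q1 P)) (Cplx (q2 P) (q3 P)) (Cplx (- q2 Q) (q3 Q)) (Cplx (q0 Q) (- q1 Q))
            (Cplx (q2 Y) (q3 Y)) (Cplx (- q0 Y) (- q1 Y)).
Proof.
  destruct P, Q, Y;
  unfold qnorm2, cpart, jpart, qmul, qadd, conj_value, col_norm2, cnorm2, cadd, cmul; simpl; ring.
Qed.

Lemma splitting_conj_bound P Q :
  (forall W, qnorm2 (qadd (qmul (cpart W) P) (qmul (jpart W) Q)) <= qnorm2 W) ->
  forall Y, qnorm2 (qadd (qmul (cpart Y) (conj_value P Q)) (qmul (jpart Y) (conj_value Q P))) <= qnorm2 Y.
Proof.
  intros h Y. rewrite splitting_conj_as_col.
  replace (qnorm2 Y) with (cnorm2 (Cplx (q2 Y) (q3 Y)) + cnorm2 (Cplx (- q0 Y) (- q1 Y)))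
    by (unfold qnorm2, cnorm2; simpl; ring).
  apply col_contraction_of_row_contraction. intros [x1 x2] [y1 y2].
  specialize (h (mkH x1 x2 y1 y2)). rewrite splitting_as_row in h.
  unfold qnorm2 in h; unfold cnorm2; simpl in *. lra.
Qed.

Lemma psum_seq_conj phi a b N :
  psum (seq_conj phi) (mkH a b 0 0) N =
  conj_value (psum phi (mkH a b 0 0) N) (psum phi (mkH a (-b) 0 0) N).
Proof.
  assert (Hterm : forall n, qmul (qpow (mkH a b 0 0) n) (qconj (phi n)) =
    conj_value (qmul (qpow (mkH a b 0 0) n) (phi n)) (qmul (qpow (mkH a (-b) 0 0) n) (phi n))).
  { intros n. destruct (qpow_complex a b n) as [A [B C]]. rewrite C.
    destruct (qpow (mkH a b 0 0) n) as [x y u v]; simpl in A, B; subst. destruct (phi n).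
    apply H_ext; unfold conj_value, qmul, qconj; simpl; ring. }
  unfold psum, seq_conj. induction N as [|N IHN]; cbn [qsum]; [apply Hterm|].
  rewrite IHN, Hterm. apply H_ext; unfold conj_value, qadd; simpl; ring.
Qed.

Lemma qcv_conj_value u v P Q : qcv u P -> qcv v Q ->
  qcv (fun n => conj_value (u n) (v n)) (conj_value P Q).
Proof.
  intros hu hv.
  set (jneg := fun x : H => mkH 0 0 (- q2 x) (- q3 x)).
  set (cconj := fun x : H => mkH (q0 x) (- q1 x) 0 0).
  assert (E : forall x y, conj_value x y = qadd (jneg x) (cconj y))
    by (intros; apply H_ext; unfold conj_value, jneg, cconj, qadd; simpl; ring).
  assert (Hlip : forall f : H -> H, (forall x, f x = jneg x) \/ (forall x, f x = cconj x) ->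
    forall x y, qnorm (qsub (f x) (f y)) <= 1 * qnorm (qsub x y)).
  { intros f [hf|hf] x y; rewrite !hf, Rmult_1_l, !qnorm_sqrt; apply sqrt_le_1_alt;
      unfold qnorm2, jneg, cconj, qsub; simpl;
      pose proof (Rle_0_sqr (q0 x - q0 y)); pose proof (Rle_0_sqr (q1 x - q1 y));
      pose proof (Rle_0_sqr (q2 x - q2 y)); pose proof (Rle_0_sqr (q3 x - q3 y)); unfold Rsqr in *; lra. }
  rewrite E. eapply qcv_ext; [intros; symmetry; apply E|].
  apply qcv_add; apply (qcv_lipschitz _ 1); auto; try lra; apply Hlip; auto.
Qed.

Lemma splitting_row_contraction phi a b P Q : regular_B_to_B phi -> qnorm (mkH a b 0 0) < 1 ->
  ps_value phi (mkH a b 0 0) P -> ps_value phi (mkH a (-b) 0 0) Q ->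
  forall W, qnorm2 (qadd (qmul (cpart W) P) (qmul (jpart W) Q)) <= qnorm2 W.
Proof.
  intros hphi hz hP hQ W. destruct (Req_dec (qnorm2 W) 0) as [e|ne].
  - apply qnorm2_eq0 in e. subst W.
    replace (qadd (qmul (cpart qzero) P) (qmul (jpart qzero) Q)) with qzero by qring.
    rewrite qnorm2_zero; lra.
  - destruct (conjugate_point W (mkH a b 0 0) ne) as [q [hWq hq]].
    destruct (hphi q ltac:(lra)) as [l [hl hl1]].
    rewrite <- (value_splitting W q a b phi l P Q hWq hl hP hQ), qnorm2_mul.
    apply Rlt_le, qnorm2_le_of_qnorm in hl1.
    pose proof (qnorm2_ge0 W). pose proof (qnorm2_ge0 l). nra.
Qed.

Lemma schur_class_seq_conj phi : regular_B_to_B phi -> schur_class (seq_conj phi).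
Proof.
  intros hphi q hq.
  destruct (slice_intertwiner_exists q) as [Y [hY0 hY]].
  set (s := qim_norm q) in *.
  destruct (qnorm_slice_points q) as [nz nzb]. fold s in nz, nzb.
  destruct (hphi (mkH (q0 q) s 0 0) ltac:(lra)) as [P [hP _]].
  destruct (hphi (mkH (q0 q) (- s) 0 0) ltac:(lra)) as [Q [hQ _]].
  pose proof (splitting_conj_bound P Q
    (splitting_row_contraction phi (q0 q) s P Q hphi ltac:(lra) hP hQ) Y) as HY.
  exists (qmul (qinv Y) (qadd (qmul (cpart Y) (conj_value P Q)) (qmul (jpart Y) (conj_value Q P)))).
  split.
  - apply (qcv_ext (fun n => qmul (qinv Y) (qmul Y (psum (seq_conj phi) q n)))).
    { intros n. rewrite qmul_assoc, qmul_qinv_l, qmul_1_l; auto. }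
    apply qcv_mul_l.
    apply (qcv_ext (fun n => qadd (qmul (cpart Y) (psum (seq_conj phi) (mkH (q0 q) s 0 0) n))
                                  (qmul (jpart Y) (psum (seq_conj phi) (mkH (q0 q) (- s) 0 0) n)))).
    { intros n. symmetry. apply psum_splitting; auto. }
    apply qcv_add; apply qcv_mul_l; (eapply qcv_ext; [intros; symmetry; apply psum_seq_conj|]);
      [|rewrite Ropp_involutive]; apply qcv_conj_value; auto.
  - apply qnorm_le_of_qnorm2; [lra|]. rewrite qnorm2_mul, qnorm2_qinv by auto.
    pose proof (qnorm2_ge0 Y). assert (0 < qnorm2 Y) by lra.
    apply Rmult_le_reg_l with (qnorm2 Y); auto. rewrite <- Rmult_assoc, Rinv_r by lra. lra.
Qed.

(** * Composition operators on H^2 *)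

Lemma star_l_contraction phi h m : regular_B_to_B phi ->
  partial_norm2 (star phi h) m <= partial_norm2 h m.
Proof.
  intros hphi. unfold partial_norm2.
  rewrite (sum_eq _ (fun n => qnorm2 (star (seq_conj h) (seq_conj phi) n)))
    by (intros; rewrite <- star_conj, qnorm2_conj; auto).
  rewrite (sum_eq (fun n => qnorm2 (h n)) (fun n => qnorm2 (seq_conj h n)))
    by (intros; unfold seq_conj; rewrite qnorm2_conj; auto).
  apply star_r_contraction, schur_class_seq_conj; auto.
Qed.

Lemma partial_norm2_Sl a m : partial_norm2 a (S m) = qnorm2 (a 0%nat) + partial_norm2 (shift a) m.
Proof. apply sum_f_R0_Sl. Qed.

Lemma partial_norm2_trunc g m : partial_norm2 (trunc g m) (S m) = partial_norm2 g m.
Proof.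
  unfold partial_norm2. rewrite tech5, trunc_gt, qnorm2_zero, Rplus_0_r by lia.
  apply sum_eq; intros; rewrite trunc_le; auto.
Qed.

Lemma partial_contraction_of_recursion (T : (nat -> H) -> nat -> H) (L : (nat -> H) -> nat -> H) :
  (forall a, T a 0%nat = a 0%nat) ->
  (forall a m, T a (S m) = L (T (shift a)) (S m)) ->
  (forall g, L g 0%nat = qzero) ->
  (forall g m N, (N <= S m)%nat -> L g N = L (trunc g m) N) ->
  (forall g m, partial_norm2 (L g) m <= partial_norm2 g m) ->
  forall m a, partial_norm2 (T a) m <= partial_norm2 a m.
Proof.
  intros hT0 hTS hL0 hLtrunc hL. induction m; intros a.
  - unfold partial_norm2; simpl. rewrite hT0; lra.
  - rewrite !partial_norm2_Sl, hT0.
    set (g := T (shift a)).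
    assert (E : partial_norm2 (shift (T a)) m = partial_norm2 (L (trunc g m)) (S m)).
    { rewrite partial_norm2_Sl, hL0, qnorm2_zero, Rplus_0_l.
      apply sum_eq; intros i hi. unfold shift. rewrite hTS, (hLtrunc g m) by lia. reflexivity. }
    pose proof (hL (trunc g m) (S m)). rewrite partial_norm2_trunc in H.
    specialize (IHm (shift a)). fold g in IHm. lra.
Qed.

Lemma ps_value_at_zero psi l : ps_value psi qzero l -> l = psi 0%nat.
Proof.
  intros h. assert (E : forall N, psum psi qzero N = psi 0%nat).
  { induction N; [apply qmul_1_l|].
    rewrite psum_S, IHN. simpl qpow. rewrite !qmul_0_l. apply qadd_0_r. }
  apply (qcv_unique (psum psi qzero)); auto.
  intros eps he. exists 0%nat. intros n _. rewrite E, qsub_diag, qnorm_zero. lra.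
Qed.

Lemma H2norm_partial a ra : H2norm_is a ra -> forall m, partial_norm2 a m <= ra ^ 2.
Proof.
  intros [_ h] m. unfold partial_norm2. rewrite (sum_eq _ (fun n => qnorm (a n) ^ 2))
    by (intros; symmetry; apply qnorm_pow2).
  apply sum_incr; auto. intros; apply pow2_ge_0.
Qed.

Lemma H2norm_one_seq : H2norm_is one_seq 1.
Proof.
  split; [lra|]. eapply Un_cv_ext; [|apply cv_const]. intros n; symmetry.
  induction n.
  - simpl. change qone with (qreal 1). rewrite qnorm_qreal; lra.
  - rewrite tech5, IHn. change (one_seq (S n)) with qzero. rewrite qnorm_zero. ring.
Qed.

Section PartialContraction.
Variable T : (nat -> H) -> (nat -> H).
Hypothesis hT : forall m a, partial_norm2 (T a) m <= partial_norm2 a m.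

Lemma contraction_H2norm_le a ra r : H2norm_is a ra -> H2norm_is (T a) r -> r <= ra.
Proof.
  intros ha [hr0 hr]. pose proof ha as [ha0 _].
  assert (r ^ 2 <= ra ^ 2).
  { eapply Rle_cv_lim; [ | exact hr | apply (cv_const (ra ^ 2))].
    intros m. rewrite (sum_eq _ (fun n => qnorm2 (T a n))) by (intros; apply qnorm_pow2).
    eapply Rle_trans; [apply hT|apply H2norm_partial; auto]. }
  nra.
Qed.

Lemma contraction_in_H2 a : in_H2 a -> in_H2 (T a).
Proof.
  intros [_ [ra hra]].
  assert (hb : forall m, partial_norm2 (T a) m <= ra ^ 2)
    by (intros m; eapply Rle_trans; [apply hT|apply H2norm_partial; auto]).
  assert (hsum : forall m, sum_f_R0 (fun n => qnorm (T a n) ^ 2) m = partial_norm2 (T a) m)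
    by (intros; apply sum_eq; intros; apply qnorm_pow2).
  assert (hgrow : Un_growing (sum_f_R0 (fun n => qnorm (T a n) ^ 2)))
    by (intros n; simpl; pose proof (pow2_ge_0 (qnorm (T a (S n)))); lra).
  split.
  - apply (regular_of_bounded_coef _ ra). intros n. destruct hra as [ra0 _].
    apply qnorm_le_of_qnorm2; auto.
    assert (qnorm (T a n) ^ 2 <= sum_f_R0 (fun n => qnorm (T a n) ^ 2) n).
    { destruct n; [simpl; lra|]. rewrite tech5. pose proof (cond_pos_sum (fun n => qnorm (T a n) ^ 2) n
        (fun i => pow2_ge_0 _)). lra. }
    rewrite qnorm_pow2, hsum in H. specialize (hb n). nra.
  - destruct (growing_cv _ hgrow) as [L hL].
    { exists (ra ^ 2). intros x [m ->]. rewrite hsum. apply hb. }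
    assert (L0 : 0 <= L).
    { pose proof (growing_ineq _ L hgrow hL 0%nat). simpl in H.
      pose proof (pow2_ge_0 (qnorm (T a 0%nat))). lra. }
    exists (sqrt L). split; [apply sqrt_pos|].
    rewrite <- Rsqr_pow2, Rsqr_sqrt; auto.
Qed.

Lemma contraction_opnorm (hone : forall m, T one_seq m = one_seq m) : is_lub (opnorm_set T) 1.
Proof.
  split.
  - intros r [a [ra [ha [hra [hra1 hr]]]]]. pose proof (contraction_H2norm_le a ra r hra hr). lra.
  - intros u hu. apply hu. exists one_seq, 1.
    pose proof H2norm_one_seq as [h0 h1].
    repeat split; auto; try lra.
    + apply (regular_of_bounded_coef _ 1). intros [|n]; simpl.
      * rewrite <- (qnorm_qreal 1) by lra. apply Rle_refl.
      * rewrite qnorm_zero; lra.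
    + exists 1. split; auto.
    + eapply Un_cv_ext; [|exact h1]. intros n. apply sum_eq; intros; rewrite hone; auto.
Qed.
End PartialContraction.

Theorem mainTheorem2 (b : nat -> H)
  (hphi : regular_B_to_B b) (hphi0 : ps_value b qzero qzero) :
  (forall a, in_H2 a -> in_H2 (Cop b a) /\ in_H2 (Dop b a)) /\
  is_lub (opnorm_set (Cop b)) 1 /\
  is_lub (opnorm_set (Dop b)) 1.
Proof.
  assert (hb : b 0%nat = qzero) by (symmetry; apply ps_value_at_zero; auto).
  assert (HC : forall m a, partial_norm2 (Cop b a) m <= partial_norm2 a m).
  { apply (partial_contraction_of_recursion _ (star b)).
    - apply Cop_0.
    - apply Cop_S; auto.
    - apply star_l_0; auto.
    - intros; apply star_l_trunc; auto.
    - intros; apply star_l_contraction; auto. }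
  assert (HD : forall m a, partial_norm2 (Dop b a) m <= partial_norm2 a m).
  { apply (partial_contraction_of_recursion _ (fun g => star g b)).
    - apply Dop_0.
    - apply Dop_S; auto.
    - intros; apply star_r_0; auto.
    - intros; apply star_r_trunc; auto.
    - intros; apply star_r_contraction, regular_B_to_B_schur_class; auto. }
  split; [|split].
  - intros a ha. split; [apply (contraction_in_H2 _ HC)|apply (contraction_in_H2 _ HD)]; auto.
  - apply (contraction_opnorm _ HC), Cop_one_seq.
  - apply (contraction_opnorm _ HD), Dop_one_seq.
Qed.
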